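(* Let $R$ and $B$ be $n\times n$ nonnegative matrices that have the same entrywise positive left and right eigenvectors $u$ and $v$ for eigenvalue $1$ (i.e. $Rv=v$, $R^Tu=u$, $Bv=v$, $B^Tu=u$). Then for every nonempty $S\subseteq[n]$, \[ \phi_S(RB)\le\phi_S(R)+\phi_S(B). \]
   Context: For a nonnegative $M$ with $Mv=v$, $M^Tu=u$, $\phi_S(M)=\langle\mathbf 1_S,D_uMD_v\mathbf 1_{\overline S}\rangle/\langle\mathbf 1_S,D_uMD_v\mathbf 1\rangle$, where $D_x$ is the diagonal matrix with $x$ on the diagonal and $\mathbf 1_S$ is the indicator vector of $S$. *)

From mathcomp Require Import all_boot all_order all_algebra.
Set Implicit Arguments. Unset Strict Implicit. Unset Printing Implicit Defensive.
Import Order.TTheory GRing.Theory Num.Theory.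
Local Open Scope ring_scope.

Definition Dg {R : ringType} {n : nat} (x : 'cV[R]_n) : 'M[R]_n :=
  diag_mx x^T.

Definition ind {R : ringType} {n : nat} (S : {set 'I_n}) : 'cV[R]_n :=
  \col_i (if i \in S then 1 else 0).

Definition ip {R : ringType} {n : nat} (x y : 'cV[R]_n) : R :=
  (x^T *m y) 0 0.

Definition phi {R : fieldType} {n : nat} (u v : 'cV[R]_n) (S : {set 'I_n})
  (M : 'M[R]_n) : R :=
  ip (ind S) (Dg u *m M *m Dg v *m ind (~: S)) /
  ip (ind S) (Dg u *m M *m Dg v *m const_mx 1).

Definition nonneg_mx {R : numDomainType} {m n : nat} (M : 'M[R]_(m, n)) : Prop :=
  forall i j, 0 <= M i j.

Definition pos_vec {R : numDomainType} {n : nat} (x : 'cV[R]_n) : Prop :=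
  forall i, 0 < x i 0.

From mathcomp Require Import all_boot all_order all_algebra.
Set Implicit Arguments. Unset Strict Implicit. Unset Printing Implicit Defensive.
Import Order.TTheory GRing.Theory Num.Theory.
Local Open Scope ring_scope.

(* Since M v = v, every phi_S(M) has the same denominator sum_(i in S) u_i v_i,
   and its numerator is the u,v-weighted flow of M from S to its complement.
   An edge i -> j of R B leaving S passes through a middle vertex k.  If k lies
   in S, the part k -> j leaves S in B, and summing u_i R_ik over i gives at
   most u_k (R^T u = u); if k lies outside S, the part i -> k leaves S in R,
   and summing B_kj v_j over j gives at most v_k (B v = v). *)

Section Flow.

Variables (R : comRingType) (n : nat) (u v : 'cV[R]_n).

Definition flow (M : 'M[R]_n) (S T : {set 'I_n}) : R :=
  \sum_(i in S) \sum_(j in T) u i 0 * M i j * v j 0.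

Definition path_flow (M N : 'M[R]_n) (S K T : {set 'I_n}) : R :=
  \sum_(i in S) \sum_(k in K) \sum_(j in T) u i 0 * M i k * N k j * v j 0.

Lemma ip_ind_flow (M : 'M[R]_n) (S T : {set 'I_n}) :
  ip (ind S) (Dg u *m M *m Dg v *m ind T) = flow M S T.
Proof.
rewrite /ip /flow /Dg mxE (big_mkcond [in S]).
apply: eq_bigr => i _; rewrite !mxE; case: ifP => _; rewrite ?mul0r // mul1r.
rewrite (big_mkcond [in T]); apply: eq_bigr => j _.
by rewrite mul_mx_diag mul_diag_mx !mxE; case: (j \in T); rewrite ?mulr1 ?mulr0.
Qed.

Lemma const_mx1_ind : const_mx 1 = ind [set: 'I_n] :> 'cV[R]_n.
Proof. by apply/matrixP => i j; rewrite !mxE in_setT. Qed.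

Lemma flow_setT_eigen (M : 'M[R]_n) (S : {set 'I_n}) :
  M *m v = v -> flow M S [set: 'I_n] = \sum_(i in S) u i 0 * v i 0.
Proof.
move=> Mv; apply: eq_bigr => i _.
rewrite -[in RHS]Mv mxE mulr_sumr (eq_bigl predT) => [|j]; last by rewrite in_setT.
by apply: eq_bigr => j _; rewrite mulrA.
Qed.

Lemma flow_mulmx_split (M N : 'M[R]_n) (S K T : {set 'I_n}) :
  flow (M *m N) S T = path_flow M N S K T + path_flow M N S (~: K) T.
Proof.
rewrite /flow /path_flow -big_split; apply: eq_bigr => i _.
have -> : \sum_(j in T) u i 0 * (M *m N) i j * v j 0 =
          \sum_k \sum_(j in T) u i 0 * M i k * N k j * v j 0.
  rewrite exchange_big; apply: eq_bigr => j _.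
  by rewrite mxE mulr_sumr mulr_suml; apply: eq_bigr => k _; rewrite !mulrA.
by rewrite (bigID [in K]) /=; congr (_ + _); apply: eq_bigl => k; rewrite inE.
Qed.

End Flow.

Lemma phiE (F : fieldType) (n : nat) (u v : 'cV[F]_n) (M : 'M[F]_n)
    (S : {set 'I_n}) :
  phi u v S M = flow u v M S (~: S) / flow u v M S [set: 'I_n].
Proof. by rewrite /phi const_mx1_ind !ip_ind_flow. Qed.

Section EigenBounds.

Variables (R : numDomainType) (n : nat).

Lemma eigen_partial_sum_le (M : 'M[R]_n) (x : 'cV[R]_n) (T : {set 'I_n}) k :
  nonneg_mx M -> nonneg_mx x -> M *m x = x ->
  \sum_(j in T) M k j * x j 0 <= x k 0.
Proof.
move=> M_ge0 x_ge0 Mx; rewrite -[in leRHS]Mx mxE [leRHS](bigID [in T]) /= lerDl.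
by apply: sumr_ge0 => j _; rewrite mulr_ge0.
Qed.

Lemma left_eigen_partial_sum_le (M : 'M[R]_n) (x : 'cV[R]_n) (S : {set 'I_n}) k :
  nonneg_mx M -> nonneg_mx x -> M^T *m x = x ->
  \sum_(i in S) x i 0 * M i k <= x k 0.
Proof.
move=> M_ge0 x_ge0 Mx; have MT_ge0 : nonneg_mx M^T by move=> i j; rewrite mxE.
have := eigen_partial_sum_le S k MT_ge0 x_ge0 Mx.
by under eq_bigr => i _ do rewrite mxE mulrC.
Qed.

Variables (u v : 'cV[R]_n) (M N : 'M[R]_n).
Hypotheses (u_ge0 : nonneg_mx u) (v_ge0 : nonneg_mx v).
Hypotheses (M_ge0 : nonneg_mx M) (N_ge0 : nonneg_mx N).

Lemma path_flow_le_flowr (S K T : {set 'I_n}) :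
  M^T *m u = u -> path_flow u v M N S K T <= flow u v N K T.
Proof.
move=> Mu; rewrite /path_flow exchange_big /=; apply: ler_sum => k _.
rewrite exchange_big /=; apply: ler_sum => j _.
rewrite -!mulr_suml; do 2 apply: ler_wpM2r => //.
exact: left_eigen_partial_sum_le.
Qed.

Lemma path_flow_le_flowl (S K T : {set 'I_n}) :
  N *m v = v -> path_flow u v M N S K T <= flow u v M S K.
Proof.
move=> Nv; apply: ler_sum => i _; apply: ler_sum => k _.
under eq_bigr => j _ do rewrite -mulrA.
rewrite -mulr_sumr; apply: ler_wpM2l; first by rewrite mulr_ge0.
exact: eigen_partial_sum_le.
Qed.

Lemma flow_mulmx_le (S T : {set 'I_n}) :
  M^T *m u = u -> N *m v = v ->
  flow u v (M *m N) S T <= flow u v M S (~: S) + flow u v N S T.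
Proof.
move=> Mu Nv; rewrite (flow_mulmx_split _ _ _ _ _ S) addrC.
by apply: lerD; [apply: path_flow_le_flowl | apply: path_flow_le_flowr].
Qed.

End EigenBounds.

Lemma pos_vec_nonneg (R : numDomainType) (n : nat) (x : 'cV[R]_n) :
  pos_vec x -> nonneg_mx x.
Proof. by move=> x_gt0 i j; rewrite ord1 ltW. Qed.

Theorem lemma3p12 (F : realFieldType) (n : nat) (Rm Bm : 'M[F]_n)
  (u v : 'cV[F]_n) :
  nonneg_mx Rm -> nonneg_mx Bm ->
  pos_vec u -> pos_vec v ->
  Rm *m v = v -> Rm^T *m u = u ->
  Bm *m v = v -> Bm^T *m u = u ->
  forall S : {set 'I_n}, S != set0 ->
    phi u v S (Rm *m Bm) <= phi u v S Rm + phi u v S Bm.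
Proof.
(* [S != set0] is unused: for S = set0 every flow, hence both sides, vanish. *)
move=> R_ge0 B_ge0 /pos_vec_nonneg u_ge0 /pos_vec_nonneg v_ge0 Rv Ru Bv _ S _.
have RBv : Rm *m Bm *m v = v by rewrite -mulmxA Bv Rv.
rewrite !phiE !flow_setT_eigen // -mulrDl.
apply: ler_wpM2r; last exact: flow_mulmx_le.
by rewrite invr_ge0 sumr_ge0 // => i _; rewrite mulr_ge0.
Qed.
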